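(* Let $\mathcal D=(D,<,\rho)$ be a computable partially ordered set. Let $c:\{0,1\}^*\times\{0,1\}^*\to\{0,1\}^*$ be a total computable injective map, and let $J:\mathbb N\times\mathbb N\to\mathbb N$ and $M\in\mathbb N$ be such that $|c(p,q)|\le J(|p|,|q|)+M$ for all $p,q\in\{0,1\}^*$. Then $$K^D\le_{ct}J(K^{\mathcal D}_{\min},K^{\mathcal D}_{\max}).$$ In particular (with the convention $\log(0)=0$), $K^D\le_{ct}(K^{\mathcal D}_{\max}+\log(K^{\mathcal D}_{\max}))+(K^{\mathcal D}_{\min}+\log(K^{\mathcal D}_{\min}))$.
   Context: A computable partially ordered set is a triple $\mathcal D=(D,<,\rho)$ where $\rho:\mathbb N\to D$ is a bijection and $<$ is a strict partial order on $D$ with $\{(m,n):\rho(m)<\rho(n)\}$ computable; partial computability of maps into $D$ is via $\rho^{-1}$. For a partial $f:\{0,1\}^*\times\mathbb N\to D$ monotone increasing in its second argument on its domain, $\max^{\mathcal D}f$ is the partial function defined exactly at those $p$ for which $\{f(p,t):t,\ f(p,t)\text{ defined}\}$ is finite and non-empty, with value its maximum element. $\mathrm{Max}_{\mathrm{PR}}[\{0,1\}^*\to\mathcal D]$ is the class of all $\max^{\mathcal D}f$ with $f$ partial computable and monotone increasing in its second argument. For partial $\varphi:\{0,1\}^*\to D$, $K_\varphi(d)=\min\{|p|:\varphi(p)=d\}$. $K^D$ is $K_\varphi$ for $\varphi$ optimal among partial computable functions $\{0,1\}^*\to D$ (i.e. for every partial computable $\psi$, $K_\varphi\le K_\psi+c$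 wherever $K_\psi$ is defined, for some constant $c$). $K^{\mathcal D}_{\max}$ is $K_U$ for some $U$ optimal in the same sense within $\mathrm{Max}_{\mathrm{PR}}[\{0,1\}^*\to\mathcal D]$; $K^{\mathcal D}_{\min}$ is $K^{\mathcal D'}_{\max}$ for the reverse order $\mathcal D'=(D,>,\rho)$. All are total functions $D\to\mathbb N$ defined up to an additive constant. $f\le_{ct}g$ iff $\exists c\,\forall d\ f(d)\le g(d)+c$. *)

From Stdlib Require Import List Arith ClassicalEpsilon.
Import ListNotations.

Inductive prog : Type :=
| PZero : prog
| PSucc : prog
| PProj : nat -> prog
| PComp : prog -> list prog -> prog
| PPrec : prog -> prog -> prog
| PMu   : prog -> prog.

Inductive eval : prog -> list nat -> nat -> Prop :=
| eZero xs : eval PZero xs 0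
| eSucc xs : eval PSucc xs (S (hd 0 xs))
| eProj i xs : eval (PProj i) xs (nth i xs 0)
| eComp f gs xs ys z :
    Forall2 (fun g y => eval g xs y) gs ys -> eval f ys z -> eval (PComp f gs) xs z
| ePrec0 f g xs y : eval f xs y -> eval (PPrec f g) (0 :: xs) y
| ePrecS f g n xs z y :
    eval (PPrec f g) (n :: xs) z -> eval g (n :: z :: xs) y ->
    eval (PPrec f g) (S n :: xs) y
| eMu f xs n :
    eval f (n :: xs) 0 ->
    (forall m, m < n -> exists k, eval f (m :: xs) (S k)) ->
    eval (PMu f) xs n.

Definition bstr := list bool.

(* bijective base-2 encoding of {0,1}^* into nat *)
Definition code (p : bstr) : nat :=
  fold_left (fun n (b : bool) => 2 * n + 1 + (if b then 1 else 0)) p 0.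

Definition strict_porder {D : Type} (lt : D -> D -> Prop) : Prop :=
  (forall x, ~ lt x x) /\ (forall x y z, lt x y -> lt y z -> lt x z).

Definition bijective_nat {D : Type} (rho : nat -> D) : Prop :=
  (forall m n, rho m = rho n -> m = n) /\ (forall d, exists n, rho n = d).

Definition computable_order {D : Type} (lt : D -> D -> Prop) (rho : nat -> D) : Prop :=
  exists e : prog, forall m n,
    (eval e [m; n] 1 <-> lt (rho m) (rho n)) /\
    (eval e [m; n] 0 <-> ~ lt (rho m) (rho n)).

Definition computable_poset {D : Type} (lt : D -> D -> Prop) (rho : nat -> D) : Prop :=
  strict_porder lt /\ bijective_nat rho /\ computable_order lt rho.

(* partial computable maps into D, via rho^{-1} *)
Definition pc_str_D {D : Type} (rho : nat -> D) (phi : bstr -> option D) : Prop :=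
  exists e : prog, forall p m, eval e [code p] m <-> phi p = Some (rho m).

Definition pc_str_nat_D {D : Type} (rho : nat -> D) (f : bstr -> nat -> option D) : Prop :=
  exists e : prog, forall p t m, eval e [code p; t] m <-> f p t = Some (rho m).

Definition total_computable_str2 (c : bstr -> bstr -> bstr) : Prop :=
  exists e : prog, forall p q n, eval e [code p; code q] n <-> n = code (c p q).

Definition monotone_incr {D : Type} (lt : D -> D -> Prop) (f : bstr -> nat -> option D) : Prop :=
  forall p t t' d d', t <= t' -> f p t = Some d -> f p t' = Some d' -> d = d' \/ lt d d'.

Definition is_max_of {D : Type} (lt : D -> D -> Prop) (g : nat -> option D) (d : D) : Prop :=
  (exists t, g t = Some d) /\
  (exists s : list D, forall t e, g t = Some e -> In e s) /\
  (forall t e, g t = Some e -> e = d \/ lt e d).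

Definition is_maxD {D : Type} (lt : D -> D -> Prop) (f : bstr -> nat -> option D)
  (U : bstr -> option D) : Prop :=
  forall p d, U p = Some d <-> is_max_of lt (f p) d.

Definition MaxPR {D : Type} (lt : D -> D -> Prop) (rho : nat -> D) (U : bstr -> option D) : Prop :=
  exists f, pc_str_nat_D rho f /\ monotone_incr lt f /\ is_maxD lt f U.

Definition isK {D : Type} (phi : bstr -> option D) (d : D) (k : nat) : Prop :=
  (exists p, phi p = Some d /\ length p = k) /\ (forall p, phi p = Some d -> k <= length p).

(* K_phi(d) = min {|p| : phi p = d}  (arbitrary value where undefined) *)
Definition K {D : Type} (phi : bstr -> option D) (d : D) : nat :=
  epsilon (inhabits 0) (isK phi d).

Definition optimal_in {D : Type} (C : (bstr -> option D) -> Prop) (phi : bstr -> option D) : Prop :=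
  C phi /\ forall psi, C psi -> exists c, forall d p, psi p = Some d ->
    exists p', phi p' = Some d /\ length p' <= K psi d + c.

Definition le_ct {D : Type} (f g : D -> nat) : Prop :=
  exists c, forall d, f d <= g d + c.

(* log with log(0) = 0 (binary, rounded down) *)
Definition log (n : nat) : nat := Nat.log2 n.

(* Let p be a shortest description of d for K_min, i.e. the values of some computable
   f_min(p, .) decrease to d, and q one for K_max, the values of f_max(q, .) increasing to d.
   Every value of f_min(p, .) lies above d and every value of f_max(q, .) below it, so d is
   their only common value.  Since step-bounded evaluation of mu-recursive programs is itself a
   total program, dovetailing both enumerations until a common value appears recovers d from
   c(p, q); this is a partial computable description of d of length at most J(|p|, |q|) + M,
   and optimality of K^D gives the bound.  For the second claim, an explicit pairing keeps the
   longer string as is and makes only the shorter one self-delimiting, at a cost of about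
   2 log of its length, which is at most log |p| + log |q|. *)

From Stdlib Require Import List Arith Lia Classical ClassicalEpsilon.
Import ListNotations.

Section EvalIndStrong.
Variable P : prog -> list nat -> nat -> Prop.
Hypothesis HZ : forall xs, P PZero xs 0.
Hypothesis HS : forall xs, P PSucc xs (S (hd 0 xs)).
Hypothesis HP : forall i xs, P (PProj i) xs (nth i xs 0).
Hypothesis HC : forall f gs xs ys z,
  Forall2 (fun g y => eval g xs y /\ P g xs y) gs ys -> eval f ys z -> P f ys z ->
  P (PComp f gs) xs z.
Hypothesis HR0 : forall f g xs y, eval f xs y -> P f xs y -> P (PPrec f g) (0 :: xs) y.
Hypothesis HRS : forall f g n xs z y,
  eval (PPrec f g) (n :: xs) z -> P (PPrec f g) (n :: xs) z ->
  eval g (n :: z :: xs) y -> P g (n :: z :: xs) y ->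
  P (PPrec f g) (S n :: xs) y.
Hypothesis HM : forall f xs n,
  eval f (n :: xs) 0 -> P f (n :: xs) 0 ->
  (forall m, m < n -> exists k, eval f (m :: xs) (S k) /\ P f (m :: xs) (S k)) ->
  P (PMu f) xs n.

Fixpoint eval_ind_strong e xs v (H : eval e xs v) {struct H} : P e xs v.
Proof.
  destruct H.
  - apply HZ.
  - apply HS.
  - apply HP.
  - apply (HC f gs xs ys z); [| exact H0 | exact (eval_ind_strong _ _ _ H0)].
    clear H0. induction H as [|g y gs' ys' Hg Hr IH]; constructor.
    + split; [exact Hg | exact (eval_ind_strong _ _ _ Hg)].
    + exact IH.
  - apply HR0; [exact H | exact (eval_ind_strong _ _ _ H)].
  - eapply HRS; [exact H | exact (eval_ind_strong _ _ _ H) | exact H0 | exact (eval_ind_strong _ _ _ H0)].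
  - apply HM; [exact H | exact (eval_ind_strong _ _ _ H) |].
    intros m Hm. destruct (H0 m Hm) as [k Hk]. exists k.
    split; [exact Hk | exact (eval_ind_strong _ _ _ Hk)].
Qed.
End EvalIndStrong.

Fixpoint prog_ind_strong (P : prog -> Prop) (HZ : P PZero) (HS : P PSucc)
  (HP : forall i, P (PProj i))
  (HC : forall f gs, P f -> Forall P gs -> P (PComp f gs))
  (HR : forall f g, P f -> P g -> P (PPrec f g)) (HM : forall f, P f -> P (PMu f))
  e {struct e} : P e :=
  let IH := prog_ind_strong P HZ HS HP HC HR HM in
  match e with
  | PZero => HZ
  | PSucc => HS
  | PProj i => HP i
  | PComp f gs => HC f gs (IH f)
      ((fix F (gs : list prog) : Forall P gs :=
          match gs with
          | [] => Forall_nil P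
          | g :: gs' => Forall_cons g (IH g) (F gs')
          end) gs)
  | PPrec f g => HR f g (IH f) (IH g)
  | PMu f => HM f (IH f)
  end.

Lemma eval_functional e xs v v' : eval e xs v -> eval e xs v' -> v = v'.
Proof.
  intros H; revert v'.
  induction H as [xs|xs|i xs|f gs xs ys z HF Hf IHf|f g xs y Hf IHf
                 |f g n xs z y Hr IHr Hg IHg|f xs n Hf IHf Hlt] using eval_ind_strong;
    intros v' H'; inversion H'; subst; auto.
  - assert (ys = ys0) as <-; [|auto].
    match goal with HH : Forall2 _ gs ?l |- _ => clear - HF HH; revert l HH end.
    induction HF as [|g y gs' ys' [Hg IHg] _ IH]; intros ys0 HH; inversion HH; subst; auto.
    f_equal; auto.
  - match goal with HH : eval (PPrec f g) (n :: xs) _ |- _ => apply IHr in HH end.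
    subst; auto.
  - match goal with HH : forall m, m < v' -> _ |- _ => rename HH into Hlt' end.
    destruct (lt_eq_lt_dec n v') as [[Hl|Hl]|Hl]; auto.
    + destruct (Hlt' n Hl) as [k Hk]. apply IHf in Hk. discriminate.
    + destruct (Hlt v' Hl) as [k [_ IH]]. match goal with HH : eval f (v' :: xs) 0 |- _ => apply IH in HH; discriminate end.
Qed.

(** * Arithmetic programs *)

Definition psucc a := PComp PSucc [a].
Fixpoint pconst k := match k with 0 => PZero | S k => psucc (pconst k) end.
Definition padd a b := PComp (PPrec (PProj 0) (psucc (PProj 1))) [a; b].
Definition ppred a := PComp (PPrec PZero (PProj 0)) [a].
Definition psub a b := PComp (PPrec (PProj 0) (ppred (PProj 1))) [b; a].
Definition pmul a b := PComp (PPrec PZero (padd (PProj 1) (PProj 2))) [a; b].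
Definition pcond c a b := PComp (PPrec (PProj 0) (PProj 3)) [c; a; b].
Definition pisz a := pcond a (pconst 1) (pconst 0).
Definition peq a b := pisz (padd (psub a b) (psub b a)).
Definition pleb a b := pisz (psub a b).
Definition ppow2 a := PComp (PPrec (pconst 1) (padd (PProj 1) (PProj 1))) [a].
Definition plog2 a :=
  PComp (PPrec PZero (padd (PProj 1) (pleb (ppow2 (psucc (PProj 0))) (PProj 2)))) [a; a].

Definition ifz (c a b : nat) := match c with 0 => a | _ => b end.

Lemma eval_val e xs v w : eval e xs v -> v = w -> eval e xs w.
Proof. intros H <-; exact H. Qed.

Lemma eval_proj i xs v : nth i xs 0 = v -> eval (PProj i) xs v.
Proof. intros <-. constructor. Qed.

Lemma eval_comp1 f g xs y z : eval g xs y -> eval f [y] z -> eval (PComp f [g]) xs z.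
Proof. intros. econstructor; eauto. Qed.

Lemma eval_comp2 f g1 g2 xs y1 y2 z :
  eval g1 xs y1 -> eval g2 xs y2 -> eval f [y1; y2] z -> eval (PComp f [g1; g2]) xs z.
Proof. intros. econstructor; eauto. Qed.

Lemma eval_comp3 f g1 g2 g3 xs y1 y2 y3 z :
  eval g1 xs y1 -> eval g2 xs y2 -> eval g3 xs y3 -> eval f [y1; y2; y3] z ->
  eval (PComp f [g1; g2; g3]) xs z.
Proof. intros. econstructor; eauto. Qed.

Lemma eval_prec f g (F : list nat -> nat) (G : nat -> nat -> list nat -> nat) ys :
  eval f ys (F ys) -> (forall k z, eval g (k :: z :: ys) (G k z ys)) ->
  forall n, eval (PPrec f g) (n :: ys) (nat_rect (fun _ => nat) (F ys) (fun k z => G k z ys) n).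
Proof. intros Hf Hg n. induction n; simpl; econstructor; eauto. Qed.

Ltac solve_proj := apply eval_proj; reflexivity.

Lemma eval_psucc a xs A : eval a xs A -> eval (psucc a) xs (S A).
Proof. intros. eapply eval_comp1; eauto. constructor. Qed.

Lemma eval_pconst k xs : eval (pconst k) xs k.
Proof. induction k; simpl; [constructor | apply eval_psucc; auto]. Qed.

Lemma eval_padd a b xs A B : eval a xs A -> eval b xs B -> eval (padd a b) xs (A + B).
Proof.
  intros. eapply eval_comp2; [eassumption.. |]. eapply eval_val.
  - apply (eval_prec _ _ (fun ys => nth 0 ys 0) (fun _ z _ => S z) [B]);
      [solve_proj | intros; apply eval_psucc; solve_proj].
  - simpl. clear. induction A; simpl; lia.
Qed.

Lemma eval_ppred a xs A : eval a xs A -> eval (ppred a) xs (pred A).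
Proof.
  intros. eapply eval_comp1; [eassumption.. |]. eapply eval_val.
  - apply (eval_prec _ _ (fun _ => 0) (fun k _ _ => k) []); [constructor | intros; solve_proj].
  - destruct A; reflexivity.
Qed.

Lemma eval_psub a b xs A B : eval a xs A -> eval b xs B -> eval (psub a b) xs (A - B).
Proof.
  intros. eapply eval_comp2; [eassumption.. |]. eapply eval_val.
  - apply (eval_prec _ _ (fun ys => nth 0 ys 0) (fun _ z _ => pred z) [A]);
      [solve_proj | intros; apply eval_ppred; solve_proj].
  - simpl. clear. induction B; simpl; lia.
Qed.

Lemma eval_pmul a b xs A B : eval a xs A -> eval b xs B -> eval (pmul a b) xs (A * B).
Proof.
  intros. eapply eval_comp2; [eassumption.. |]. eapply eval_val.
  - apply (eval_prec _ _ (fun _ => 0) (fun _ z ys => z + nth 0 ys 0) [B]);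
      [constructor | intros; apply eval_padd; solve_proj].
  - simpl. clear. induction A; simpl; lia.
Qed.

Lemma eval_pcond c a b xs C A B :
  eval c xs C -> eval a xs A -> eval b xs B -> eval (pcond c a b) xs (ifz C A B).
Proof.
  intros. eapply eval_comp3; [eassumption.. |]. eapply eval_val.
  - apply (eval_prec _ _ (fun ys => nth 0 ys 0) (fun _ _ ys => nth 1 ys 0) [A; B]);
      [solve_proj | intros; solve_proj].
  - destruct C; reflexivity.
Qed.

Lemma eval_pisz a xs A : eval a xs A -> eval (pisz a) xs (if A =? 0 then 1 else 0).
Proof.
  intros. eapply eval_val; [apply eval_pcond; eauto; apply eval_pconst |].
  destruct A; reflexivity.
Qed.

Lemma eval_peq a b xs A B :
  eval a xs A -> eval b xs B -> eval (peq a b) xs (if A =? B then 1 else 0).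
Proof.
  intros. eapply eval_val; [apply eval_pisz, eval_padd; apply eval_psub; eauto |].
  destruct (Nat.eqb_spec A B), (Nat.eqb_spec (A - B + (B - A)) 0); auto; lia.
Qed.

Lemma eval_pleb a b xs A B :
  eval a xs A -> eval b xs B -> eval (pleb a b) xs (if A <=? B then 1 else 0).
Proof.
  intros. eapply eval_val; [apply eval_pisz, eval_psub; eauto |].
  destruct (Nat.leb_spec A B), (Nat.eqb_spec (A - B) 0); auto; lia.
Qed.

Lemma eval_ppow2 a xs A : eval a xs A -> eval (ppow2 a) xs (2 ^ A).
Proof.
  intros. eapply eval_comp1; [eassumption.. |]. eapply eval_val.
  - apply (eval_prec _ _ (fun _ => 1) (fun _ z _ => z + z) []);
      [apply eval_pconst | intros; apply eval_padd; solve_proj].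
  - clear. induction A; simpl; lia.
Qed.

Lemma eval_plog2 a xs A : eval a xs A -> eval (plog2 a) xs (Nat.log2 A).
Proof.
  intros. eapply eval_comp2; [eassumption.. |]. eapply eval_val.
  - apply (eval_prec _ _ (fun _ => 0)
             (fun k z _ => z + (if 2 ^ S k <=? A then 1 else 0)) [A]);
      [constructor | intros; apply eval_padd; [solve_proj |]].
    apply eval_pleb; [apply eval_ppow2, eval_psucc |]; solve_proj.
  - simpl. destruct A as [|A]; [reflexivity |].
    assert (Hcount : forall n, nat_rect (fun _ => nat) 0
              (fun k z => z + (if 2 ^ S k <=? S A then 1 else 0)) n = Nat.min n (Nat.log2 (S A))).
    { induction n as [|n IHn]; [reflexivity |]. cbn [nat_rect]. rewrite IHn.
      destruct (Nat.leb_spec (2 ^ S n) (S A)) as [Hle|Hgt].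
      - apply Nat.log2_le_pow2 in Hle; lia.
      - assert (~ S n <= Nat.log2 (S A)) by (intros H'; apply Nat.log2_le_pow2 in H'; lia). lia. }
    rewrite Hcount. pose proof (Nat.log2_lt_lin (S A)). lia.
Qed.

(** * Step-bounded evaluation *)

Fixpoint all_some (l : list (option nat)) : option (list nat) :=
  match l with
  | [] => Some []
  | o :: l' => match o, all_some l' with Some y, Some ys => Some (y :: ys) | _, _ => None end
  end.

(* State of the search for the least zero of [h] among [0 .. j-1]: 0 while every value seen is
   a successor, 1 once an undefined value is met first, [S (S m)] once [m] is found. *)
Fixpoint mu_state (h : nat -> option nat) (j : nat) : nat :=
  match j with
  | 0 => 0
  | S j' =>
      match mu_state h j' with
      | 0 => match h j' with None => 1 | Some 0 => S (S j') | Some (S _) => 0 end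
      | st => st
      end
  end.

(* Evaluation in which every unbounded search only inspects candidates below [s]. *)
Fixpoint run (e : prog) (s : nat) (xs : list nat) {struct e} : option nat :=
  match e with
  | PZero => Some 0
  | PSucc => Some (S (hd 0 xs))
  | PProj i => Some (nth i xs 0)
  | PComp f gs =>
      match all_some (map (fun g => run g s xs) gs) with Some ys => run f s ys | None => None end
  | PPrec f g =>
      match xs with
      | [] => None
      | n :: ys =>
          nat_rect (fun _ => option nat) (run f s ys)
            (fun k acc => match acc with Some z => run g s (k :: z :: ys) | None => None end) n
      end
  | PMu f => match mu_state (fun j => run f s (j :: xs)) s with S (S m) => Some m | _ => None end
  end.

Lemma all_some_spec l ys : all_some l = Some ys <-> Forall2 (fun o y => o = Some y) l ys.
Proof.
  revert ys; induction l as [|o l IH]; intros ys; simpl.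
  - split; intros H; inversion H; constructor.
  - split.
    + destruct o as [y|]; [|discriminate].
      destruct (all_some l) as [ys'|] eqn:E; [|discriminate].
      intros H; inversion H; subst. constructor; auto. apply IH; auto.
    + intros H; inversion H; subst. apply IH in H4. rewrite H4. auto.
Qed.

Lemma mu_state_searching h j : (forall k, k < j -> exists v, h k = Some (S v)) -> mu_state h j = 0.
Proof.
  induction j; intros H; simpl; auto. rewrite IHj by (intros; apply H; lia).
  destruct (H j ltac:(lia)) as [v ->]. auto.
Qed.

Lemma mu_state_searching_inv h j :
  mu_state h j = 0 -> forall k, k < j -> exists v, h k = Some (S v).
Proof.
  induction j; intros H k Hk; [lia|]. simpl in H.
  destruct (mu_state h j) eqn:E; [|discriminate].
  destruct (h j) as [[|v]|] eqn:E2; try discriminate.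
  assert (k < j \/ k = j) as [Hl| ->] by lia; eauto.
Qed.

Lemma mu_state_found h j m : mu_state h j = S (S m) <->
  (m < j /\ h m = Some 0 /\ forall k, k < m -> exists v, h k = Some (S v)).
Proof.
  split.
  - induction j; simpl; intros H; [discriminate|].
    destruct (mu_state h j) as [|st] eqn:E.
    + pose proof (mu_state_searching_inv h j E).
      destruct (h j) as [[|v]|] eqn:Ehj; try discriminate.
      injection H as <-. repeat split; auto.
    + destruct (IHj H) as [? [? ?]]. split; [lia | auto].
  - induction j; intros [Hm [H0 Hk]]; [lia|]. simpl.
    assert (m < j \/ m = j) as [Hl| ->] by lia.
    + rewrite IHj by auto. auto.
    + rewrite mu_state_searching by auto. rewrite H0. auto.
Qed.

Lemma run_mono e s s' xs v : run e s xs = Some v -> s <= s' -> run e s' xs = Some v.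
Proof.
  revert s s' xs v.
  induction e as [| |i|f gs IHf IHgs|f g IHf IHg|f IHf] using prog_ind_strong;
    intros s s' xs v H Hs; simpl in *; auto.
  - destruct (all_some (map (fun g => run g s xs) gs)) as [ys|] eqn:E; [|discriminate].
    assert (all_some (map (fun g => run g s' xs) gs) = Some ys) as ->; [|eauto].
    apply all_some_spec. apply all_some_spec in E. clear H. revert ys E.
    induction IHgs as [|g gs' Hg Hgs IH]; intros ys E; inversion E; subst; constructor; eauto.
  - destruct xs as [|n ys]; [discriminate|].
    revert v H. induction n; simpl; intros v H; eauto.
    destruct (nat_rect _ _ _ n) as [z|] eqn:E; [|discriminate].
    rewrite (IHn z eq_refl). eauto.
  - destruct (mu_state (fun j => run f s (j :: xs)) s) as [|[|m]] eqn:E; try discriminate.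
    injection H as <-. apply mu_state_found in E as [Hm [H0 Hk]].
    assert (mu_state (fun j => run f s' (j :: xs)) s' = S (S m)) as ->; auto.
    apply mu_state_found. split; [lia|]. split; eauto.
    intros k Hk'. destruct (Hk k Hk') as [w Hw]. eauto.
Qed.

Lemma run_sound e s xs v : run e s xs = Some v -> eval e xs v.
Proof.
  revert s xs v.
  induction e as [| |i|f gs IHf IHgs|f g IHf IHg|f IHf] using prog_ind_strong;
    intros s xs v H; simpl in *.
  1-3: injection H as <-; constructor.
  - destruct (all_some (map (fun g => run g s xs) gs)) as [ys|] eqn:E; [|discriminate].
    econstructor; [|eauto]. apply all_some_spec in E. clear H. revert ys E.
    induction IHgs as [|g gs' Hg Hgs IH]; intros ys E; inversion E; subst; constructor; eauto.
  - destruct xs as [|n ys]; [discriminate|].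
    revert v H. induction n; simpl; intros v H; [constructor; eauto |].
    destruct (nat_rect _ _ _ n) as [z|] eqn:E; [|discriminate].
    econstructor; eauto.
  - destruct (mu_state (fun j => run f s (j :: xs)) s) as [|[|m]] eqn:E; try discriminate.
    injection H as <-. apply mu_state_found in E as [Hm [H0 Hk]].
    constructor; eauto. intros k Hk'. destruct (Hk k Hk') as [w Hw]. eauto.
Qed.

Lemma uniform_bound (P : nat -> nat -> Prop) n :
  (forall m s s', P m s -> s <= s' -> P m s') ->
  (forall m, m < n -> exists s, P m s) -> exists s, forall m, m < n -> P m s.
Proof.
  intros Hmono. induction n; intros H; [exists 0; intros; lia |].
  destruct IHn as [s1 H1]; [intros; apply H; lia |].
  destruct (H n ltac:(lia)) as [s2 H2]. exists (s1 + s2). intros m Hm.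
  assert (m < n \/ m = n) as [Hl| ->] by lia; eapply Hmono; eauto; lia.
Qed.

Lemma run_complete e xs v : eval e xs v -> exists s, run e s xs = Some v.
Proof.
  revert e xs v. apply eval_ind_strong.
  1-3: exists 0; auto.
  - intros f gs xs ys z HF _ [s0 Hs0].
    assert (exists s1, forall s, s1 <= s -> all_some (map (fun g => run g s xs) gs) = Some ys)
      as [s1 Hs1].
    { clear s0 Hs0. induction HF as [|g y gs' ys' [_ [sg Hsg]] _ IH]; [exists 0; auto |].
      destruct IH as [s2 Hs2]. exists (sg + s2). intros s Hs. simpl.
      rewrite (run_mono _ _ s _ _ Hsg) by lia. rewrite Hs2 by lia. auto. }
    exists (s0 + s1). simpl. rewrite Hs1 by lia. eapply run_mono; eauto; lia.
  - intros f g xs y _ [s Hs]. exists s. auto.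
  - intros f g n xs z y _ [s1 Hs1] _ [s2 Hs2]. exists (s1 + s2).
    pose proof (run_mono (PPrec f g) s1 (s1 + s2) (n :: xs) z Hs1 ltac:(lia)) as H1.
    simpl in *. rewrite H1. eapply run_mono; eauto; lia.
  - intros f xs n _ [s0 Hs0] Hlt.
    destruct (uniform_bound (fun m s => exists k, run f s (m :: xs) = Some (S k)) n) as [s1 Hs1].
    { intros m s s' [k Hk] Hss. exists k. eapply run_mono; eauto. }
    { intros m Hm. destruct (Hlt m Hm) as [k [_ [s Hs]]]. eauto. }
    exists (s0 + s1 + S n). simpl.
    assert (mu_state (fun j => run f (s0 + s1 + S n) (j :: xs)) (s0 + s1 + S n) = S (S n))
      as ->; auto.
    apply mu_state_found. split; [lia|]. split; [eapply run_mono; eauto; lia |].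
    intros k Hk. destruct (Hs1 k Hk) as [w Hw]. exists w. eapply run_mono; eauto; lia.
Qed.

Definition oenc (o : option nat) : nat := match o with None => 0 | Some v => S v end.

Definition projs (from len : nat) : list prog := map PProj (seq from len).

Fixpoint pprod (l : list prog) : prog :=
  match l with [] => pconst 1 | g :: l' => pmul g (pprod l') end.

(* [prun e a] is a total program of arity [1 + a] computing [oenc (run e s xs)] from [s :: xs]:
   a product of encodings detects an undefined argument of a composition, and the state of
   [mu_state] is advanced by primitive recursion up to the bound [s]. *)
Fixpoint prun (e : prog) (a : nat) {struct e} : prog :=
  match e with
  | PZero => pconst 1
  | PSucc => psucc (psucc (PProj 1))
  | PProj i => psucc (PProj (S i))
  | PComp f gs =>
      pcond (pprod (map (fun g => prun g a) gs)) PZero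
        (PComp (prun f (length gs)) (PProj 0 :: map (fun g => ppred (prun g a)) gs))
  | PPrec f g =>
      match a with
      | 0 => PZero
      | S a' =>
          PComp (PPrec (prun f a')
                   (pcond (PProj 1) PZero
                      (PComp (prun g (S (S a')))
                         (PProj 2 :: PProj 0 :: ppred (PProj 1) :: projs 3 a'))))
                (PProj 1 :: PProj 0 :: projs 2 a')
      end
  | PMu f =>
      let v := PComp (prun f (S a)) (PProj 2 :: PProj 0 :: projs 3 a) in
      ppred (PComp (PPrec PZero
                      (pcond (PProj 1)
                         (pcond v (pconst 1) (pcond (ppred v) (psucc (psucc (PProj 0))) PZero))
                         (PProj 1)))
                   (PProj 0 :: PProj 0 :: projs 1 a))
  end.

Lemma eval_projs ys pre xs k : xs = pre ++ ys -> k = length pre ->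
  Forall2 (fun g y => eval g xs y) (projs k (length ys)) ys.
Proof.
  intros -> ->. revert pre. induction ys as [|y ys IH]; intros pre; simpl; constructor.
  - apply eval_proj. rewrite app_nth2, Nat.sub_diag by lia. reflexivity.
  - specialize (IH (pre ++ [y])). rewrite <- app_assoc, length_app, Nat.add_1_r in IH.
    exact IH.
Qed.

Lemma eval_pprod gs xs ys : Forall2 (fun g y => eval g xs y) gs ys ->
  eval (pprod gs) xs (fold_right Nat.mul 1 ys).
Proof. intros H. induction H; simpl; [apply (eval_pconst 1) | apply eval_pmul; auto]. Qed.

Lemma Forall2_map_l {A B C} (F : A -> B) (R : B -> C -> Prop) l1 l2 :
  Forall2 (fun x y => R (F x) y) l1 l2 -> Forall2 R (map F l1) l2.
Proof. intros H; induction H; simpl; constructor; auto. Qed.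

Lemma Forall2_map_r {A B C} (F : B -> C) (R : A -> C -> Prop) l1 l2 :
  Forall2 (fun x y => R x (F y)) l1 l2 -> Forall2 R l1 (map F l2).
Proof. intros H; induction H; simpl; constructor; auto. Qed.

Lemma all_some_oenc l ys : all_some l = Some ys -> map oenc l = map S ys.
Proof. intros H. apply all_some_spec in H. induction H; simpl; subst; f_equal; auto. Qed.

Lemma all_some_none_oenc l : all_some l = None -> fold_right Nat.mul 1 (map oenc l) = 0.
Proof.
  induction l as [|o l IH]; intros H; simpl in *; [discriminate |].
  destruct o as [y|]; simpl; auto. destruct (all_some l); [discriminate |]. rewrite IH; auto; lia.
Qed.

Lemma prod_succ_neq0 ys : fold_right Nat.mul 1 (map S ys) <> 0.
Proof. induction ys; simpl; lia. Qed.

Definition prun_spec (e : prog) : Prop :=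
  forall a s xs, length xs = a -> eval (prun e a) (s :: xs) (oenc (run e s xs)).

Lemma prun_spec_comp f gs : prun_spec f -> Forall prun_spec gs -> prun_spec (PComp f gs).
Proof.
  intros IHf IHgs a s xs Hlen. simpl.
  set (os := map (fun g => run g s xs) gs).
  assert (HF : Forall2 (fun g y => eval (prun g a) (s :: xs) y) gs (map oenc os)).
  { subst os. induction IHgs; simpl; constructor; auto. }
  pose proof (eval_pprod _ _ _ (Forall2_map_l _ (fun g y => eval g (s :: xs) y) _ _ HF)) as HP.
  assert (HX : eval (PComp (prun f (length gs)) (PProj 0 :: map (fun g => ppred (prun g a)) gs))
                 (s :: xs) (oenc (run f s (map pred (map oenc os))))).
  { eapply eComp; [| apply IHf; subst os; rewrite !length_map; reflexivity].
    constructor; [solve_proj |]. apply Forall2_map_l, Forall2_map_r.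
    clear - HF. induction HF; constructor; auto. apply eval_ppred; auto. }
  pose proof (eval_pcond _ _ _ _ _ _ _ HP ltac:(constructor) HX) as HC.
  destruct (all_some os) as [ys|] eqn:E.
  - rewrite (all_some_oenc _ _ E), map_map, map_id in HC. simpl in HC.
    destruct (fold_right Nat.mul 1 (map S ys)) eqn:E2;
      [exfalso; eapply prod_succ_neq0; eauto | exact HC].
  - rewrite (all_some_none_oenc _ E) in HC. exact HC.
Qed.

Lemma prun_spec_prec f g : prun_spec f -> prun_spec g -> prun_spec (PPrec f g).
Proof.
  intros IHf IHg [|a] s xs Hlen; simpl.
  - destruct xs; [constructor | discriminate].
  - destruct xs as [|n ys]; [discriminate |]. injection Hlen as <-.
    set (step := pcond (PProj 1) PZero (PComp (prun g (S (S (length ys))))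
                   (PProj 2 :: PProj 0 :: ppred (PProj 1) :: projs 3 (length ys)))).
    assert (Hstep : forall k z, eval step (k :: z :: s :: ys)
                      (ifz z 0 (oenc (run g s (k :: pred z :: ys))))).
    { intros k z. apply eval_pcond; [solve_proj | constructor |].
      eapply eComp; [| apply IHg; reflexivity].
      repeat (constructor; [first [solve_proj | apply eval_ppred; solve_proj] |]).
      apply (eval_projs ys [k; z; s]); reflexivity. }
    apply eComp with (ys := n :: s :: ys).
    { repeat (constructor; [solve_proj |]). apply (eval_projs ys [s; n]); reflexivity. }
    eapply eval_val.
    + apply (eval_prec _ _ (fun _ => oenc (run f s ys))
               (fun k z _ => ifz z 0 (oenc (run g s (k :: pred z :: ys)))) (s :: ys));
        [apply IHf; reflexivity | exact Hstep].
    + clear. induction n as [|n IHn]; [reflexivity |]. simpl. rewrite IHn.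
      destruct (nat_rect (fun _ : nat => option nat) _ _ n); reflexivity.
Qed.

Lemma prun_spec_mu f : prun_spec f -> prun_spec (PMu f).
Proof.
  intros IHf a s xs <-. simpl.
  set (v := PComp (prun f (S (length xs))) (PProj 2 :: PProj 0 :: projs 3 (length xs))).
  set (h := fun j => run f s (j :: xs)).
  assert (Hv : forall j st, eval v (j :: st :: s :: xs) (oenc (h j))).
  { intros j st. eapply eComp; [| apply IHf; reflexivity].
    repeat (constructor; [solve_proj |]). apply (eval_projs xs [j; st; s]); reflexivity. }
  set (G := fun j st => ifz st (ifz (oenc (h j)) 1 (ifz (pred (oenc (h j))) (S (S j)) 0)) st).
  assert (HG : forall j st, eval (pcond (PProj 1)
                 (pcond v (pconst 1) (pcond (ppred v) (psucc (psucc (PProj 0))) PZero))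
                 (PProj 1)) (j :: st :: s :: xs) (G j st)).
  { intros j st. apply eval_pcond; [solve_proj | | solve_proj].
    apply eval_pcond; [auto | apply (eval_pconst 1) |].
    apply eval_pcond; [apply eval_ppred; auto | apply eval_psucc, eval_psucc; solve_proj |].
    constructor. }
  assert (Hstate : forall j, nat_rect (fun _ => nat) 0 (fun j st => G j st) j = mu_state h j).
  { induction j as [|j IH]; simpl; auto. rewrite IH. unfold G.
    destruct (mu_state h j) as [|st]; simpl; auto. destruct (h j) as [[|w]|]; reflexivity. }
  replace (oenc _) with (pred (mu_state h s)) by (destruct (mu_state h s) as [|[|m]]; reflexivity).
  apply eval_ppred. apply eComp with (ys := s :: s :: xs).
  { repeat (constructor; [solve_proj |]). apply (eval_projs xs [s]); reflexivity. }
  rewrite <- Hstate. exact (eval_prec _ _ (fun _ => 0) (fun j st _ => G j st) _ ltac:(constructor) HG s).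
Qed.

Lemma eval_prun e a s xs : length xs = a -> eval (prun e a) (s :: xs) (oenc (run e s xs)).
Proof.
  revert a s xs. fold (prun_spec e).
  induction e using prog_ind_strong.
  - intros a s xs _. apply (eval_pconst 1).
  - intros a s xs _. apply eval_psucc, eval_psucc. destruct xs; solve_proj.
  - intros a s xs _. apply eval_psucc. solve_proj.
  - apply prun_spec_comp; auto.
  - apply prun_spec_prec; auto.
  - apply prun_spec_mu; auto.
Qed.

Lemma code_app p b : code (p ++ [b]) = 2 * code p + 1 + (if b then 1 else 0).
Proof. unfold code. rewrite fold_left_app. reflexivity. Qed.

Fixpoint decode_fuel (fuel n : nat) : bstr :=
  match fuel, n with
  | S fuel', S m => decode_fuel fuel' (Nat.div2 m) ++ [Nat.odd m]
  | _, _ => []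
  end.

Definition decode (n : nat) : bstr := decode_fuel n n.

Lemma decode_fuel_enough f f' n : n <= f -> n <= f' -> decode_fuel f n = decode_fuel f' n.
Proof.
  revert f' n. induction f; intros f' n H1 H2.
  - assert (n = 0) as -> by lia. destruct f'; auto.
  - destruct n; [destruct f'; auto |]. destruct f' as [|f']; [lia |]. simpl.
    f_equal. apply IHf; pose proof (Nat.le_div2_diag_l n); lia.
Qed.

Lemma decode_S m : decode (S m) = decode (Nat.div2 m) ++ [Nat.odd m].
Proof.
  unfold decode. simpl. f_equal.
  apply decode_fuel_enough; pose proof (Nat.le_div2_diag_l m); lia.
Qed.

Lemma code_decode n : code (decode n) = n.
Proof.
  induction n as [n IH] using lt_wf_ind. destruct n; [reflexivity |].
  rewrite decode_S, code_app, IH by (pose proof (Nat.le_div2_diag_l n); lia).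
  pose proof (Nat.div2_odd n). destruct (Nat.odd n); simpl in *; lia.
Qed.

Lemma decode_code p : decode (code p) = p.
Proof.
  induction p as [|b p IH] using rev_ind; [reflexivity |].
  rewrite code_app.
  replace (2 * code p + 1 + (if b then 1 else 0)) with (S (2 * code p + (if b then 1 else 0)))
    by lia.
  rewrite decode_S. destruct b.
  - rewrite Nat.div2_odd', Nat.odd_odd, IH. reflexivity.
  - rewrite Nat.add_0_r, Nat.div2_double, Nat.odd_even, IH. reflexivity.
Qed.

Lemma code_inj p q : code p = code q -> p = q.
Proof. intros H. rewrite <- (decode_code p), <- (decode_code q), H. reflexivity. Qed.

Lemma length_code p : length p = Nat.log2 (code p + 1).
Proof.
  symmetry. apply Nat.log2_unique; [lia |].
  induction p as [|b p IH] using rev_ind; [simpl; lia |].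
  rewrite code_app, length_app, Nat.add_1_r. simpl in *. destruct b; lia.
Qed.

(** * Dovetailed search for a common value *)

Fixpoint firstnz (H : nat -> nat) (n : nat) : nat :=
  match n with 0 => 0 | S j => ifz (firstnz H j) (H j) (firstnz H j) end.

Lemma firstnz_witness H n v : firstnz H n = S v -> exists j, j < n /\ H j = S v.
Proof.
  induction n; simpl; intros E; [discriminate |].
  destruct (firstnz H n) eqn:E1; simpl in E.
  - exists n; split; auto.
  - destruct IHn as [j [Hj1 Hj2]]; auto. exists j; split; auto.
Qed.

Lemma firstnz_neq0 H n j : j < n -> H j <> 0 -> firstnz H n <> 0.
Proof.
  induction n; intros Hj Hn; [lia |]. simpl.
  destruct (firstnz H n) eqn:E; simpl; [| lia].
  assert (j < n \/ j = n) as [Hl| ->] by lia; auto. exfalso; apply (IHn Hl Hn); auto.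
Qed.

(* [psearch h k] runs [h] on [j :: _ :: L] for [j <= nth k L 0] and returns the first nonzero
   value; the second argument of [h] is the accumulator of the recursion. *)
Definition psearch (h : prog) (k : nat) : prog :=
  PComp (PPrec PZero (pcond (PProj 1) h (PProj 1))) (psucc (PProj k) :: projs 0 (k + 2)).

Lemma eval_psearch h k L (H : nat -> nat) : length L = k + 2 ->
  (forall j z, eval h (j :: z :: L) (H j)) -> eval (psearch h k) L (firstnz H (S (nth k L 0))).
Proof.
  intros Hl Hh. eapply eComp.
  - constructor; [apply eval_psucc; solve_proj |].
    rewrite <- Hl. apply (eval_projs L []); reflexivity.
  - eapply eval_val.
    + apply (eval_prec _ _ (fun _ => 0) (fun k z _ => ifz z (H k) z) L); [constructor |].
      intros. apply eval_pcond; auto; solve_proj.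
    + clear. induction (S (nth k L 0)); simpl; auto. rewrite IHn. reflexivity.
Qed.

Section CommonValueSearch.
Variables emin emax ec : prog.
Variable Cf : nat -> nat -> nat.
Hypothesis eval_ec : forall x y, eval ec [x; y] (Cf x y).

(* On [[t'; _; t; _; y; _; x; _; u; r]]: [S m] if [Cf x y = r] and both programs output [m]
   within the bound [u], else [0]. *)
Definition pcandidate : prog :=
  let m1 := PComp (prun emin 2) [PProj 8; PProj 6; PProj 2] in
  let m2 := PComp (prun emax 2) [PProj 8; PProj 4; PProj 0] in
  pcond (peq (PComp ec [PProj 6; PProj 4]) (PProj 9)) PZero (pcond (peq m1 m2) PZero m1).

Definition psearch_all : prog := psearch (psearch (psearch (psearch pcandidate 6) 4) 2) 0.

Definition pcommon : prog :=
  ppred (PComp psearch_all [PMu (pisz psearch_all); PProj 0]).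

Definition candidate r u x y t t' : nat :=
  if Cf x y =? r then
    let m := oenc (run emin u [x; t]) in if m =? oenc (run emax u [y; t']) then m else 0
  else 0.

Definition search_all r u : nat :=
  firstnz (fun x => firstnz (fun y => firstnz (fun t => firstnz (fun t' =>
    candidate r u x y t t') (S u)) (S u)) (S u)) (S u).

Lemma eval_psearch_all r u : eval psearch_all [u; r] (search_all r u).
Proof.
  apply eval_psearch; auto. intros x a1.
  apply eval_psearch; auto. intros y a2.
  apply eval_psearch; auto. intros t a3.
  apply eval_psearch; auto. intros t' a4.
  assert (Hrun : forall e z1 z2, eval (PComp (prun e 2) [PProj 8; PProj z1; PProj z2])
                   [t'; a4; t; a3; y; a2; x; a1; u; r]
                   (oenc (run e u [nth z1 [t'; a4; t; a3; y; a2; x; a1; u; r] 0;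
                                   nth z2 [t'; a4; t; a3; y; a2; x; a1; u; r] 0]))).
  { intros e z1 z2. eapply eComp; [| apply eval_prun; reflexivity].
    repeat constructor. }
  eapply eval_val.
  - apply eval_pcond; [| constructor |].
    + apply eval_peq; [| solve_proj]. eapply eComp; [repeat (constructor; [solve_proj |]) |].
      constructor. apply eval_ec.
    + apply eval_pcond; [apply eval_peq | constructor |]; apply Hrun.
  - unfold candidate. simpl.
    destruct (Cf x y =? r), (oenc (run emin u [x; t]) =? oenc (run emax u [y; t'])); reflexivity.
Qed.

Lemma search_all_witness r u m : search_all r u = S m -> exists x y t t',
  Cf x y = r /\ run emin u [x; t] = Some m /\ run emax u [y; t'] = Some m.
Proof.
  intros H.
  destruct (firstnz_witness _ _ _ H) as [x [_ H1]].
  destruct (firstnz_witness _ _ _ H1) as [y [_ H2]].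
  destruct (firstnz_witness _ _ _ H2) as [t [_ H3]].
  destruct (firstnz_witness _ _ _ H3) as [t' [_ H4]].
  exists x, y, t, t'. unfold candidate in H4.
  destruct (Nat.eqb_spec (Cf x y) r); [| discriminate].
  destruct (run emin u [x; t]) as [v1|], (run emax u [y; t']) as [v2|]; simpl in H4;
    try discriminate.
  destruct (Nat.eqb_spec v1 v2); [| discriminate]. injection H4 as ->. subst. auto.
Qed.

Lemma search_all_neq0 r u x y t t' m :
  Cf x y = r -> run emin u [x; t] = Some m -> run emax u [y; t'] = Some m ->
  x <= u -> y <= u -> t <= u -> t' <= u -> search_all r u <> 0.
Proof.
  intros Hc H1 H2 Hx Hy Ht Ht'.
  apply (firstnz_neq0 _ _ x); [lia |]. apply (firstnz_neq0 _ _ y); [lia |].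
  apply (firstnz_neq0 _ _ t); [lia |]. apply (firstnz_neq0 _ _ t'); [lia |].
  unfold candidate. rewrite Hc, Nat.eqb_refl, H1, H2, Nat.eqb_refl. discriminate.
Qed.

Lemma eval_pcommon r u : (forall k, k < u -> search_all r k = 0) -> search_all r u <> 0 ->
  eval pcommon [r] (pred (search_all r u)).
Proof.
  intros Hlt Hu. apply eval_ppred. eapply eComp; [| apply eval_psearch_all].
  constructor; [| constructor; [solve_proj | constructor]].
  constructor.
  - eapply eval_val; [apply eval_pisz, eval_psearch_all |].
    destruct (Nat.eqb_spec (search_all r u) 0); congruence.
  - intros k Hk. exists 0. eapply eval_val; [apply eval_pisz, eval_psearch_all |].
    rewrite Hlt; auto.
Qed.
End CommonValueSearch.

Lemma least_nat (F : nat -> Prop) n : F n -> exists k, F k /\ forall k', F k' -> k <= k'.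
Proof.
  intros Hn.
  destruct (dec_inh_nat_subset_has_unique_least_element F (fun n => classic (F n))
              (ex_intro _ n Hn)) as [k [[Hk Hmin] _]].
  eauto.
Qed.

Lemma common_value_search (emin emax ec : prog) (Cf : nat -> nat -> nat) :
  (forall x y, eval ec [x; y] (Cf x y)) ->
  exists E, forall r,
    (exists x y t t' m, Cf x y = r /\ eval emin [x; t] m /\ eval emax [y; t'] m) ->
    exists x y t t' m,
      Cf x y = r /\ eval emin [x; t] m /\ eval emax [y; t'] m /\ eval E [r] m.
Proof.
  intros Hec. exists (pcommon emin emax ec). intros r (x & y & t & t' & m & Hc & H1 & H2).
  destruct (run_complete _ _ _ H1) as [s1 Hs1], (run_complete _ _ _ H2) as [s2 Hs2].
  set (u := x + y + t + t' + s1 + s2).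
  assert (Hu : search_all emin emax Cf r u <> 0).
  { apply (search_all_neq0 _ _ _ _ _ x y t t' m); auto; try lia;
      eapply run_mono; eauto; lia. }
  destruct (least_nat (fun u => search_all emin emax Cf r u <> 0) u Hu) as [u0 [Hu0 Hmin]].
  destruct (search_all emin emax Cf r u0) as [|m0] eqn:E; [congruence |].
  destruct (search_all_witness _ _ _ _ _ _ E) as (x0 & y0 & t0 & t0' & Hc0 & R1 & R2).
  exists x0, y0, t0, t0', m0. repeat split; eauto using run_sound.
  replace m0 with (pred (search_all emin emax Cf r u0)) by (rewrite E; reflexivity).
  apply eval_pcommon; [exact Hec | | rewrite E; discriminate].
  intros k Hk. destruct (Nat.eq_dec (search_all emin emax Cf r k) 0) as [|Hne]; auto.
  specialize (Hmin k Hne). lia.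
Qed.

Lemma K_spec {D : Type} (phi : bstr -> option D) d :
  (exists p, phi p = Some d) -> isK phi d (K phi d).
Proof.
  intros [p Hp]. unfold K. apply epsilon_spec.
  destruct (least_nat (fun k => exists p, phi p = Some d /\ length p = k) (length p))
    as [k [[p' [H1 H2]] H3]]; [eauto |].
  exists k. split; eauto.
Qed.

Lemma K_le_length {D : Type} (phi : bstr -> option D) d p : phi p = Some d -> K phi d <= length p.
Proof. intros H. apply (K_spec phi d ltac:(eauto)). auto. Qed.

Lemma K_attained {D : Type} (phi : bstr -> option D) d : (exists p, phi p = Some d) ->
  exists p, phi p = Some d /\ length p = K phi d.
Proof. intros H. apply (K_spec phi d H). Qed.

Lemma MaxPR_const {D : Type} (lt : D -> D -> Prop) (rho : nat -> D) d :
  bijective_nat rho -> MaxPR lt rho (fun _ => Some d).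
Proof.
  intros [rho_inj rho_surj]. destruct (rho_surj d) as [n <-].
  exists (fun _ _ => Some (rho n)). split; [| split].
  - exists (pconst n). intros p t m. split.
    + intros H. rewrite (eval_functional _ _ _ _ H (eval_pconst n _)). reflexivity.
    + intros H. injection H as H. apply rho_inj in H as <-. apply eval_pconst.
  - intros p t t' e e' _ [= <-] [= <-]. auto.
  - intros p e. split.
    + intros [= <-]. split; [exists 0; auto | split].
      * exists [rho n]. intros t e' [= <-]. simpl; auto.
      * intros t e' [= <-]. auto.
    + intros [[t [= ->]] _]. reflexivity.
Qed.

(* Optimality against a constant function makes every element describable. *)
Lemma optimal_MaxPR_describes {D : Type} (lt : D -> D -> Prop) (rho : nat -> D) U d :
  bijective_nat rho -> optimal_in (MaxPR lt rho) U -> exists p, U p = Some d.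
Proof.
  intros Hb [_ Hopt]. destruct (Hopt _ (MaxPR_const lt rho d Hb)) as [c Hc].
  destruct (Hc d [] eq_refl) as [p [Hp _]]. eauto.
Qed.

Lemma pc_str_D_of_prog {D : Type} (rho : nat -> D) (E : prog) : bijective_nat rho ->
  exists psi, pc_str_D rho psi /\ forall w m, eval E [code w] m -> psi w = Some (rho m).
Proof.
  intros [rho_inj _].
  set (psi := fun w => match excluded_middle_informative (exists m, eval E [code w] m) with
    | left H => Some (rho (proj1_sig (constructive_indefinite_description _ H)))
    | right _ => None
    end).
  assert (Hpsi : forall w m, eval E [code w] m -> psi w = Some (rho m)).
  { intros w m Hm. unfold psi. destruct (excluded_middle_informative _) as [H|H].
    - destruct (constructive_indefinite_description _ H) as [m' Hm']. simpl.
      rewrite (eval_functional _ _ _ _ Hm' Hm). reflexivity.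
    - exfalso; eauto. }
  exists psi. split; auto. exists E. intros w m. split; auto.
  unfold psi. destruct (excluded_middle_informative _) as [H|H]; [| discriminate].
  destruct (constructive_indefinite_description _ H) as [m' Hm']. simpl.
  intros [= Hmm']. apply rho_inj in Hmm' as ->. exact Hm'.
Qed.

Lemma common_value_max_min {D : Type} (lt : D -> D -> Prop) g h d e t t' :
  strict_porder lt -> is_max_of lt g d -> is_max_of (fun x y => lt y x) h d ->
  g t = Some e -> h t' = Some e -> e = d.
Proof.
  intros [Hirr Htr] [_ [_ Hg]] [_ [_ Hh]] Hgt Hht.
  destruct (Hg t e Hgt) as [|Hed]; auto.
  destruct (Hh t' e Hht) as [|Hde]; auto.
  exfalso. apply (Hirr d). eauto.
Qed.

Lemma K_le_ct_pairing {D : Type} (lt : D -> D -> Prop) (rho : nat -> D)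
  (phi Umax Umin : bstr -> option D) (c : bstr -> bstr -> bstr) (J : nat -> nat -> nat) (M : nat) :
  computable_poset lt rho ->
  optimal_in (pc_str_D rho) phi ->
  optimal_in (MaxPR lt rho) Umax ->
  optimal_in (MaxPR (fun x y => lt y x) rho) Umin ->
  total_computable_str2 c ->
  (forall p q p' q', c p q = c p' q' -> p = p' /\ q = q') ->
  (forall p q, length (c p q) <= J (length p) (length q) + M) ->
  le_ct (K phi) (fun d => J (K Umin d) (K Umax d)).
Proof.
  intros [Hpo [Hrho _]] [_ Hphi] Hmax Hmin [ec Hec] Hinj Hlen.
  pose proof Hmin as [[fmin [[emin Hemin] [_ Hfmin]]] _].
  pose proof Hmax as [[fmax [[emax Hemax] [_ Hfmax]]] _].
  destruct (common_value_search emin emax ec (fun x y => code (c (decode x) (decode y))))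
    as [E HE].
  { intros x y. rewrite <- (code_decode x), <- (code_decode y) at 1. apply Hec. reflexivity. }
  destruct (pc_str_D_of_prog rho E Hrho) as [psi [Hpsi HEpsi]].
  destruct (Hphi psi Hpsi) as [c0 Hc0].
  exists (M + c0). intros d.
  destruct (K_attained Umin d (optimal_MaxPR_describes _ _ _ d Hrho Hmin)) as [p [Hp <-]].
  destruct (K_attained Umax d (optimal_MaxPR_describes _ _ _ d Hrho Hmax)) as [q [Hq <-]].
  apply Hfmin in Hp. apply Hfmax in Hq.
  assert (Hpsid : psi (c p q) = Some d).
  { pose proof Hp as [[t1 Ht1] _]. pose proof Hq as [[t2 Ht2] _].
    destruct (proj2 Hrho d) as [m <-].
    destruct (HE (code (c p q))) as (x & y & t & t' & m' & Hxy & Hx & Hy & HEm').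
    { exists (code p), (code q), t1, t2, m. rewrite !decode_code.
      split; [reflexivity |]. split; [apply Hemin | apply Hemax]; auto. }
    apply code_inj, Hinj in Hxy as [<- <-].
    rewrite <- (code_decode x) in Hx. rewrite <- (code_decode y) in Hy.
    apply Hemin in Hx. apply Hemax in Hy.
    rewrite (HEpsi _ _ HEm'). f_equal.
    eapply common_value_max_min; eauto. }
  destruct (Hc0 d (c p q) Hpsid) as [p' [Hp' Hp'len]].
  pose proof (K_le_length phi d p' Hp'). pose proof (K_le_length psi d _ Hpsid).
  pose proof (Hlen p q). lia.
Qed.

(** * A pairing with logarithmic overhead *)

(* Read from the least significant bit: the flag [f], then [l] ones and a zero, then
   [m = log2 (S Sx)] in [l] bits, then the [m] low bits of [S Sx], then [S Lx]. *)
Definition core (f Sx Lx : nat) : nat :=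
  let m := Nat.log2 (S Sx) in
  let l := S (Nat.log2 m) in
  (((S Lx * 2 ^ m + (S Sx - 2 ^ m)) * 2 ^ l + m) * 2 ^ S l + pred (2 ^ l)) * 2 + f.

(* The shorter string goes to the self-delimiting slot. *)
Definition enc (X Y : nat) : nat :=
  if Nat.log2 (S X) <=? Nat.log2 (S Y) then core 0 X Y else core 1 Y X.

Definition pcore (f : nat) (s l : prog) : prog :=
  let m := plog2 (psucc s) in
  let l' := psucc (plog2 m) in
  padd (pmul (padd (pmul (padd (pmul (padd (pmul (psucc l) (ppow2 m)) (psub (psucc s) (ppow2 m)))
                                       (ppow2 l')) m)
                           (ppow2 (psucc l'))) (ppred (ppow2 l')))
             (pconst 2)) (pconst f).

Definition penc : prog :=
  pcond (pleb (plog2 (psucc (PProj 0))) (plog2 (psucc (PProj 1))))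
    (pcore 1 (PProj 1) (PProj 0)) (pcore 0 (PProj 0) (PProj 1)).

Lemma eval_pcore f s l xs Sx Lx :
  eval s xs Sx -> eval l xs Lx -> eval (pcore f s l) xs (core f Sx Lx).
Proof.
  intros Hs Hl. eapply eval_val.
  - repeat first [ apply eval_padd | apply eval_pmul | apply eval_psub | apply eval_ppred
                 | apply eval_pconst | apply eval_psucc | apply eval_ppow2 | apply eval_plog2
                 | eassumption ].
  - reflexivity.
Qed.

Lemma eval_penc X Y : eval penc [X; Y] (enc X Y).
Proof.
  eapply eval_val.
  - apply eval_pcond; [apply eval_pleb; apply eval_plog2, eval_psucc; solve_proj
                      | apply eval_pcore; solve_proj | apply eval_pcore; solve_proj].
  - unfold enc. destruct (_ <=? _); reflexivity.
Qed.

Definition unary_suffix (Z l : nat) : nat := Z * 2 ^ S l + pred (2 ^ l).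

Lemma unary_suffix_inj l1 l2 Z1 Z2 : unary_suffix Z1 l1 = unary_suffix Z2 l2 -> l1 = l2 /\ Z1 = Z2.
Proof.
  assert (H0 : forall Z, unary_suffix Z 0 = 2 * Z) by (intros; unfold unary_suffix; simpl; lia).
  assert (HS : forall Z l, unary_suffix Z (S l) = 2 * unary_suffix Z l + 1).
  { intros Z l. unfold unary_suffix. pose proof (Nat.pow_nonzero 2 l ltac:(lia)).
    change (2 ^ S (S l)) with (2 * (2 * 2 ^ l)). change (2 ^ S l) with (2 * 2 ^ l). lia. }
  revert l2 Z1 Z2. induction l1; intros [|l2] Z1 Z2 H; rewrite ?H0, ?HS in H; try lia.
  destruct (IHl1 l2 Z1 Z2) as [-> ->]; auto. lia.
Qed.

Lemma divmod_inj d q1 q2 r1 r2 : r1 < d -> r2 < d -> q1 * d + r1 = q2 * d + r2 ->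
  q1 = q2 /\ r1 = r2.
Proof. intros. apply (Nat.div_mod_unique d); lia. Qed.

Lemma log2_S_spec X : 2 ^ Nat.log2 (S X) <= S X < 2 ^ S (Nat.log2 (S X)).
Proof. apply Nat.log2_spec. lia. Qed.

Lemma lt_pow2_log2 m : m < 2 ^ S (Nat.log2 m).
Proof. destruct m; [simpl; lia |]. apply Nat.log2_spec. lia. Qed.

Lemma core_inj f1 f2 S1 S2 L1 L2 : f1 <= 1 -> f2 <= 1 -> core f1 S1 L1 = core f2 S2 L2 ->
  f1 = f2 /\ S1 = S2 /\ L1 = L2.
Proof.
  unfold core. intros Hf1 Hf2 H.
  set (m1 := Nat.log2 (S S1)) in *. set (m2 := Nat.log2 (S S2)) in *.
  set (A1 := (S L1 * 2 ^ m1 + (S S1 - 2 ^ m1)) * 2 ^ S (Nat.log2 m1) + m1) in *.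
  set (A2 := (S L2 * 2 ^ m2 + (S S2 - 2 ^ m2)) * 2 ^ S (Nat.log2 m2) + m2) in *.
  assert (unary_suffix A1 (S (Nat.log2 m1)) = unary_suffix A2 (S (Nat.log2 m2)) /\ f1 = f2)
    as [EA ->] by (unfold unary_suffix; lia).
  apply unary_suffix_inj in EA as [[= El] EA].
  unfold A1, A2 in EA. rewrite El in EA.
  apply divmod_inj in EA as [ET Em]; [| rewrite <- El; apply lt_pow2_log2 | apply lt_pow2_log2].
  rewrite Em in ET.
  pose proof (log2_S_spec S1) as B1. pose proof (log2_S_spec S2) as B2.
  fold m1 in B1. fold m2 in B2. rewrite Em in B1. change (2 ^ S m2) with (2 * 2 ^ m2) in *.
  apply divmod_inj in ET as [EL ES]; lia.
Qed.

Lemma enc_inj X1 Y1 X2 Y2 : enc X1 Y1 = enc X2 Y2 -> X1 = X2 /\ Y1 = Y2.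
Proof.
  unfold enc. destruct (_ <=? _), (_ <=? _); intros H;
    apply core_inj in H as [Hf [HS HL]]; lia.
Qed.

Lemma mul_pow2_add_lt x y i j : x < 2 ^ i -> y < 2 ^ j -> x * 2 ^ j + y < 2 ^ (i + j).
Proof. intros. rewrite Nat.pow_add_r. nia. Qed.

Lemma core_lt_pow2 f Sx Lx : f <= 1 ->
  core f Sx Lx <
  2 ^ (S (Nat.log2 (S Lx)) + Nat.log2 (S Sx) + 2 * Nat.log2 (Nat.log2 (S Sx)) + 4).
Proof.
  intros Hf. unfold core.
  set (m := Nat.log2 (S Sx)). set (l := S (Nat.log2 m)).
  pose proof (log2_S_spec Sx) as Bs. pose proof (log2_S_spec Lx) as BL. fold m in Bs.
  change (2 ^ S m) with (2 * 2 ^ m) in Bs.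
  assert (HT : S Lx * 2 ^ m + (S Sx - 2 ^ m) < 2 ^ (S (Nat.log2 (S Lx)) + m))
    by (apply mul_pow2_add_lt; lia).
  assert (HZ : (S Lx * 2 ^ m + (S Sx - 2 ^ m)) * 2 ^ l + m < 2 ^ (S (Nat.log2 (S Lx)) + m + l))
    by (apply mul_pow2_add_lt; [exact HT | apply lt_pow2_log2]).
  assert (HN : ((S Lx * 2 ^ m + (S Sx - 2 ^ m)) * 2 ^ l + m) * 2 ^ S l + pred (2 ^ l)
               < 2 ^ (S (Nat.log2 (S Lx)) + m + l + S l)).
  { apply mul_pow2_add_lt; [exact HZ |]. change (2 ^ S l) with (2 * 2 ^ l).
    pose proof (Nat.pow_nonzero 2 l). lia. }
  replace (S (Nat.log2 (S Lx)) + m + 2 * Nat.log2 m + 4) with (S (Nat.log2 (S Lx)) + m + l + S l + 1)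
    by (unfold l; lia).
  rewrite (Nat.pow_add_r 2 _ 1). simpl (2 ^ 1). lia.
Qed.

Definition cpair (p q : bstr) : bstr := decode (enc (code p) (code q)).

Lemma cpair_computable : total_computable_str2 cpair.
Proof.
  exists penc. intros p q n. unfold cpair. rewrite code_decode. split.
  - intros H. exact (eval_functional _ _ _ _ H (eval_penc _ _)).
  - intros ->. apply eval_penc.
Qed.

Lemma cpair_inj p q p' q' : cpair p q = cpair p' q' -> p = p' /\ q = q'.
Proof.
  unfold cpair. intros H. apply (f_equal code) in H. rewrite !code_decode in H.
  apply enc_inj in H as [H1 H2]. split; apply code_inj; auto.
Qed.

Lemma length_cpair p q :
  length (cpair p q) <= (length q + log (length q)) + (length p + log (length p)) + 5.
Proof.
  unfold cpair, log. rewrite length_code, code_decode, (length_code p), (length_code q).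
  rewrite !Nat.add_1_r. unfold enc.
  destruct (Nat.leb_spec (Nat.log2 (S (code p))) (Nat.log2 (S (code q)))) as [Hpq|Hpq].
  - pose proof (core_lt_pow2 0 (code p) (code q) ltac:(lia)) as H.
    apply Nat.log2_le_mono in H. rewrite Nat.log2_pow2 in H by lia.
    pose proof (Nat.log2_le_mono _ _ Hpq). lia.
  - pose proof (core_lt_pow2 1 (code q) (code p) ltac:(lia)) as H.
    apply Nat.log2_le_mono in H. rewrite Nat.log2_pow2 in H by lia.
    assert (Nat.log2 (S (code q)) <= Nat.log2 (S (code p))) as Hqp by lia.
    pose proof (Nat.log2_le_mono _ _ Hqp). lia.
Qed.

Theorem mainTheorem4 (D : Type) (lt : D -> D -> Prop) (rho : nat -> D)
  (Hpo : computable_poset lt rho)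
  (phi Umax Umin : bstr -> option D)
  (Hphi : optimal_in (pc_str_D rho) phi)
  (Hmax : optimal_in (MaxPR lt rho) Umax)
  (Hmin : optimal_in (MaxPR (fun x y => lt y x) rho) Umin) :
  (forall (c : bstr -> bstr -> bstr) (J : nat -> nat -> nat) (M : nat),
      total_computable_str2 c ->
      (forall p q p' q', c p q = c p' q' -> p = p' /\ q = q') ->
      (forall p q, length (c p q) <= J (length p) (length q) + M) ->
      le_ct (K phi) (fun d => J (K Umin d) (K Umax d)))
  /\
  le_ct (K phi)
    (fun d => (K Umax d + log (K Umax d)) + (K Umin d + log (K Umin d))).
Proof.
  split.
  - intros c J M. apply (K_le_ct_pairing lt rho); assumption.
  - exact (K_le_ct_pairing lt rho phi Umax Umin cpair (fun x y => (y + log y) + (x + log x)) 5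
             Hpo Hphi Hmax Hmin cpair_computable cpair_inj length_cpair).
Qed.
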